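(* Let $F$ be a weighted graph with edge weight $\omega:E(F)\to\{3,4,5\}$. Assume that $F=T\cup P$, where $T$ is a spanning tree of $F$ all of whose edges have weight $3$ and $P$ is a non-spanning path of weight $\ell$ with end-vertices $x$ and $y$. If $F$ has no cycle of weight $11$ and $P$ has minimal weight among all $x,y$-paths in $F[N^1_F[P]]$, then $|N^1_F[P]|\ge\frac{\ell}{3}+\frac{5}{3}$.
   Context: The weight of a subgraph is the sum of the weights of its edges. $N^1_F[P]$ is the closed neighbourhood of $V(P)$ in $F$: all vertices at distance at most $1$ in $F$ from some vertex of $P$. A path is non-spanning if it does not contain all vertices of $F$. *)

From mathcomp Require Import all_boot all_order all_algebra.
Set Implicit Arguments. Unset Strict Implicit. Unset Printing Implicit Defensive.

(* Graphs: a simple graph on a finite vertex type V is a symmetric,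
   irreflexive relation [e : rel V].  Weights are a function w : V -> V -> nat
   (only its values on edges matter). *)

Section Graphs.
Variable V : finType.

Definition steps (s : seq V) : seq (V * V) := zip s (behead s).

Definition gpath (e : rel V) (s : seq V) : bool :=
  if s is x :: p then path e x p && uniq s else false.

Definition pweight (w : V -> V -> nat) (s : seq V) : nat :=
  \sum_(pr <- steps s) w pr.1 pr.2.

Definition gcycle (e : rel V) (s : seq V) : bool :=
  (2 < size s) && uniq s && cycle e s.

Definition cweight (w : V -> V -> nat) (s : seq V) : nat :=
  if s is x :: p then pweight w (rcons (x :: p) x) else 0.

Definition pedge (s : seq V) (u v : V) : bool :=
  has (fun pr => ((pr.1 == u) && (pr.2 == v)) || ((pr.1 == v) && (pr.2 == u)))
      (steps s).

Definition spanning_tree (t : rel V) : Prop :=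
  symmetric t /\ (forall u v, connect t u v) /\ (forall c, ~~ gcycle t c).

Definition closed_nbhd (e : rel V) (s : seq V) : {set V} :=
  [set v | has (fun u => (u == v) || e u v) s].

End Graphs.

From mathcomp Require Import all_boot all_order all_algebra zify.
Set Implicit Arguments. Unset Strict Implicit. Unset Printing Implicit Defensive.
Import GRing.Theory Num.Theory.

(* Write P = v_0 ... v_k with edge weights w_i = w(v_i, v_{i+1}) in {3,4,5}; give v_0 the
   charge 2 and v_{i+1} the charge w_i - 3, for a total of 2 + l - 3k.  Minimality of P in
   F[N[P]] forbids shortcuts: a T-edge between vertices of P joins consecutive ones, and if
   an outside vertex z has T-neighbours v_a, v_b (a < b) then w_a + ... + w_{b-1} <= 6.
   A charged vertex v_c starts a run of T-edges along P; as T is connected and P is not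
   spanning, some v_j on this run has a T-neighbour z outside P, and z receives the charge
   of v_c.  If z receives charges from its first donor v_c0, whose run meets z at v_j0, and
   from a later v_{i+1}, the bound 6 forces i = j0 and w_i = 4, as w_i = 5 would make
   z v_i v_{i+1} a cycle of weight 11.  So each vertex of N[P] outside P receives at most
   2 + 1, and 2 + l - 3k <= 3 (|N[P]| - k - 1). *)

Lemma leq_sum_two_points (I : finType) (P : pred I) (F : I -> nat) (i0 i1 : I) m n :
  P i0 -> F i0 <= m -> (forall i, P i -> i != i0 -> i = i1 /\ F i <= n) ->
  \sum_(i | P i) F i <= m + n.
Proof.
move=> Pi0 Fi0 others; rewrite (bigD1 i0) //= leq_add //.
apply: (@leq_trans (\sum_(i | i == i1) n)); last by rewrite big_pred1_eq.
rewrite big_mkcond [leqRHS]big_mkcond; apply: leq_sum => i _ /=.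
case: ifP => // /andP[Pi ne_i0]; have [-> le_n] := others i Pi ne_i0.
by rewrite eqxx.
Qed.

Lemma last_take (T : Type) (x : T) (s : seq T) n :
  n <= size s -> last x (take n s) = nth x (x :: s) n.
Proof.
move=> le_ns; rewrite (last_nth x) size_take.
case: ltnP => [lt_ns | ge_ns]; last first.
  have /eqP -> : n == size s by rewrite eqn_leq le_ns ge_ns.
  by rewrite take_oversize.
by case: n le_ns lt_ns => //= n _ lt_ns; rewrite nth_take.
Qed.

Lemma path_drop (T : Type) (e : rel T) (x : T) (s : seq T) n :
  path e x s -> n <= size s -> path e (nth x (x :: s) n) (drop n s).
Proof.
rewrite -{1}(cat_take_drop n s) cat_path => /andP[_].
by move=> + le_ns; rewrite last_take.
Qed.

Lemma sum_nat_split_at (F : nat -> nat) m i n : m <= i -> i < n ->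
  \sum_(m <= l < n) F l = \sum_(m <= l < i) F l + F i + \sum_(i.+1 <= l < n) F l.
Proof.
by move=> le_mi lt_in; rewrite (big_cat_nat le_mi (ltnW lt_in)) /= (big_ltn lt_in) /= addnA.
Qed.

Section Weights.
Context {V : finType} (w : V -> V -> nat).

Lemma pweight_seq1 a : pweight w [:: a] = 0.
Proof. by rewrite /pweight /steps /= big_nil. Qed.

Lemma pweight_cons2 a b u : pweight w [:: a, b & u] = w a b + pweight w (b :: u).
Proof. by rewrite /pweight /steps /= big_cons. Qed.

Lemma pweight_cat a u u' :
  pweight w (a :: u ++ u') = pweight w (a :: u) + pweight w (last a u :: u').
Proof.
elim: u a => [|b u IH] a /=; first by rewrite pweight_seq1.
by rewrite !pweight_cons2 IH addnA.
Qed.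

Lemma pweight_nth d u :
  pweight w u = \sum_(0 <= i < (size u).-1) w (nth d u i) (nth d u i.+1).
Proof.
elim: u => [|a u IH]; first by rewrite /pweight /steps /= big_nil big_geq.
case: u IH => [|b u] IH; first by rewrite pweight_seq1 big_geq.
by rewrite pweight_cons2 IH big_nat_recl.
Qed.

Lemma pweight_take d u n : n < size u ->
  pweight w (take n.+1 u) = \sum_(0 <= i < n) w (nth d u i) (nth d u i.+1).
Proof.
move=> lt_nu; rewrite (pweight_nth d) size_takel //=.
by apply: eq_big_nat => i /andP[_ lt_in]; rewrite !nth_take // ltnS ltnW.
Qed.

Lemma pweight_drop d u m :
  pweight w (drop m u) = \sum_(m <= i < (size u).-1) w (nth d u i) (nth d u i.+1).
Proof.
rewrite (pweight_nth d) size_drop -[in RHS](add0n m) big_addn.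
have -> : (size u - m).-1 = (size u).-1 - m by lia.
by apply: eq_bigr => i _; rewrite !nth_drop addnS addnC.
Qed.

Lemma cweight3 a b c : cweight w [:: a; b; c] = w a b + w b c + w c a.
Proof. by rewrite /cweight /= !pweight_cons2 pweight_seq1 addn0 addnA. Qed.

Lemma gcycle3 (e : rel V) a b c : a != b -> a != c -> b != c ->
  e a b -> e b c -> e c a -> gcycle e [:: a; b; c].
Proof.
by move=> ab ac bc eab ebc eca; rewrite /gcycle /= !inE negb_or ab ac bc eab ebc eca.
Qed.

End Weights.

Section ShortestPathNeighbourhood.
Variables (V : finType) (adj t : rel V) (w : V -> V -> nat) (x : V) (p : seq V).

Local Notation s := (x :: p).
Local Notation k := (size p).
Local Notation v i := (nth x (x :: p) i).
Local Notation we i := (w (v i) (v i.+1)).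
Local Notation N := (closed_nbhd adj (x :: p)).

Hypothesis adj_weight : forall u u', adj u u' -> w u u' \in [:: 3; 4; 5].
Hypothesis t_sym : symmetric t.
Hypothesis t_connect : forall u u', connect t u u'.
Hypothesis t_weight : forall u u', t u u' -> w u u' = 3.
Hypothesis t_adj : subrel t adj.
Hypothesis P_gpath : gpath adj s.
Hypothesis P_nonspanning : exists u, u \notin s.
Hypothesis no_cycle11 : forall c, gcycle adj c -> cweight w c != 11.
Hypothesis P_min : forall q, gpath adj (x :: q) -> last x q = last x p ->
  all (fun u => u \in N) (x :: q) -> pweight w s <= pweight w (x :: q).

Lemma P_path : path adj x p.
Proof. by case/andP: P_gpath. Qed.

Lemma P_uniq : uniq s.
Proof. by case/andP: P_gpath. Qed.

Lemma mem_v i : i <= k -> v i \in s.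
Proof. by move=> le_ik; rewrite mem_nth. Qed.

Lemma v_inj i j : i <= k -> j <= k -> v i = v j -> i = j.
Proof. by move=> le_ik le_jk /eqP; rewrite nth_uniq ?P_uniq // => /eqP. Qed.

Lemma v_index u : u \in s -> exists2 j, j <= k & u = v j.
Proof. by move=> u_s; exists (index u s); rewrite ?nth_index // -ltnS index_mem. Qed.

Lemma adj_v i : i < k -> adj (v i) (v i.+1).
Proof. by move=> lt_ik; apply: (pathP x P_path). Qed.

Lemma we_bounds i : i < k -> 3 <= we i <= 5.
Proof. by move=> /adj_v/adj_weight; rewrite !inE => /or3P[] /eqP ->. Qed.

Lemma sum_we_ge m n : n <= k -> 3 * (n - m) <= \sum_(m <= i < n) we i.
Proof.
move=> le_nk; rewrite mulnC -sum_nat_const_nat big_nat_cond [leqRHS]big_nat_cond.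
apply: leq_sum => i /andP[/andP[_ lt_in] _].
by case/andP: (@we_bounds i (leq_trans lt_in le_nk)).
Qed.

Lemma pweight_prefix a : a <= k -> pweight w (x :: take a p) = \sum_(0 <= i < a) we i.
Proof. by move=> le_ak; rewrite -[x :: _]/(take a.+1 s) (pweight_take w x). Qed.

Lemma pweight_suffix b : b <= k -> pweight w (v b :: drop b p) = \sum_(b <= i < k) we i.
Proof. by move=> le_bk; rewrite -[drop b p]/(drop b.+1 s) -drop_nth ?(pweight_drop w x). Qed.

Lemma pweight_P : pweight w s = \sum_(0 <= i < k) we i.
Proof. by rewrite -pweight_prefix // take_size. Qed.

Lemma mem_N_P u : u \in s -> u \in N.
Proof. by move=> u_s; rewrite inE; apply/hasP; exists u; rewrite ?eqxx. Qed.

Lemma mem_N_adj u z : u \in s -> adj u z -> z \in N.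
Proof. by move=> u_s adj_uz; rewrite inE; apply/hasP; exists u; rewrite ?adj_uz ?orbT. Qed.

Lemma segment_le_detour a b r : a < b -> b <= k -> uniq r ->
    all (fun z => z \notin s) r -> all (fun z => z \in N) r ->
    path adj (v a) (rcons r (v b)) ->
  \sum_(a <= i < b) we i <= pweight w (v a :: rcons r (v b)).
Proof.
move=> lt_ab le_bk r_uniq r_out r_N r_path.
have le_ak : a <= k by lia.
have drop_s : drop b s = v b :: drop b p by rewrite (drop_nth x).
have last_pre : last x (take a p) = v a by rewrite last_take.
have sub_s : subseq (take a.+1 s ++ drop b s) s.
  rewrite -{3}(cat_take_drop a.+1 s) cat_subseq // -(subnK lt_ab) -drop_drop.
  exact: drop_subseq.
have q_gpath : gpath adj (x :: take a p ++ r ++ drop b s).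
  apply/andP; split.
    rewrite cat_path take_path ?P_path // last_pre drop_s -cat_rcons cat_path r_path.
    by rewrite last_rcons path_drop ?P_path.
  rewrite -cat_cons -[x :: take a p]/(take a.+1 s) uniq_catCA cat_uniq r_uniq.
  rewrite (subseq_uniq sub_s P_uniq) andbT.
  apply/hasPn => u /(mem_subseq sub_s) u_s; apply/negP => u_r.
  by move/allP: r_out => /(_ u u_r); rewrite u_s.
have q_last : last x (take a p ++ r ++ drop b s) = last x p.
  by rewrite !last_cat drop_s /= -[in RHS](cat_take_drop b p) last_cat last_take.
have q_N : all (fun u => u \in N) (x :: take a p ++ r ++ drop b s).
  rewrite -cat_cons -[x :: take a p]/(take a.+1 s) !all_cat r_N andTb.
  apply/andP; split; apply/allP => u u_s;
    apply: mem_N_P; [exact: mem_take u_s | exact: mem_drop u_s].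
have := P_min q_gpath q_last q_N.
rewrite pweight_cat last_pre drop_s -cat_rcons pweight_cat last_rcons.
rewrite pweight_prefix // pweight_suffix // pweight_P.
rewrite (big_cat_nat (n := a)) // (big_cat_nat (ltnW lt_ab) le_bk) /=; lia.
Qed.

Lemma tree_chord_succ i j : i < j -> j <= k -> t (v i) (v j) -> j = i.+1.
Proof.
move=> lt_ij le_jk t_ij; apply/eqP; rewrite eqn_leq lt_ij andbT; apply/negP => gap.
have := @segment_le_detour i j [::] lt_ij le_jk erefl erefl erefl.
rewrite [path _ _ _]/= t_adj // pweight_cons2 pweight_seq1 t_weight // => /(_ isT).
have := @sum_we_ge i j le_jk; lia.
Qed.

Lemma tree_nbrs_segment_le6 z a b : z \notin s -> t z (v a) -> t z (v b) -> a < b -> b <= k ->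
  \sum_(a <= i < b) we i <= 6.
Proof.
move=> z_out t_za t_zb lt_ab le_bk.
have t_az : t (v a) z by rewrite t_sym.
have le_ak : a <= k by lia.
apply: leq_trans (@segment_le_detour a b [:: z] lt_ab le_bk erefl _ _ _) _.
- by rewrite /= z_out.
- by rewrite /= (mem_N_adj (mem_v le_ak) (t_adj t_az)).
- by rewrite /= !t_adj.
- by rewrite !pweight_cons2 pweight_seq1 !t_weight.
Qed.

Lemma tree_nbrs_succ_weight_neq5 z j : z \notin s -> t z (v j) -> t z (v j.+1) -> j < k ->
  we j != 5.
Proof.
move=> z_out t_zj t_zj1 lt_jk.
have t_j1z : t (v j.+1) z by rewrite t_sym.
have v_neq : v j != v j.+1 by apply/eqP => /v_inj; lia.
have z_neq u : u \in s -> z != u by move=> u_s; rewrite eq_sym (memPn z_out).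
have := no_cycle11 (gcycle3 (z_neq _ (mem_v (ltnW lt_jk))) (z_neq _ (mem_v lt_jk))
  v_neq (t_adj t_zj) (adj_v lt_jk) (t_adj t_j1z)).
rewrite cweight3 (t_weight t_zj) (t_weight t_j1z).
by case/andP: (we_bounds lt_jk); lia.
Qed.

Definition tree_run c j := all (fun i => t (v i) (v i.+1)) (index_iota c j).

Definition tree_exit c j z := [&& c <= j, j <= k, z \notin s, t z (v j) & tree_run c j].

Definition has_exit c z := [exists j : 'I_k.+1, tree_exit c j z].

Definition run_from c : pred V :=
  [pred u | [exists j : 'I_k.+1, [&& u == v j, c <= j & tree_run c j]]].

Lemma tree_runP c j : reflect (forall i, c <= i < j -> t (v i) (v i.+1)) (tree_run c j).
Proof.
apply: (iffP allP) => run i; first by move=> i_cj; apply: run; rewrite mem_index_iota.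
by rewrite mem_index_iota => /run.
Qed.

Lemma mem_run_from c j : j <= k -> c <= j -> tree_run c j -> v j \in run_from c.
Proof.
by move=> le_jk le_cj run; apply/existsP; exists (inord j); rewrite inordK ?eqxx ?le_cj.
Qed.

Lemma run_from_closed c : (forall i, c = i.+1 -> ~~ t (v i) (v c)) ->
  (forall z, ~~ has_exit c z) -> closed t (run_from c).
Proof.
move=> run_start no_exit.
suff run_fwd u u' : t u u' -> u \in run_from c -> u' \in run_from c.
  by move=> u u' t_uu'; apply/idP/idP; apply: run_fwd; rewrite // t_sym.
move=> t_uu' /existsP[j /and3P[/eqP u_j le_cj /tree_runP run]]; subst u.
have le_jk : j <= k by rewrite -ltnS.
have [u'_s | u'_out] := boolP (u' \in s); last first.
  case/negP: (no_exit u'); apply/existsP; exists j.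
  by rewrite /tree_exit le_cj le_jk u'_out t_sym t_uu'; apply/tree_runP.
have [j' le_j'k u'_j] := v_index u'_s; subst u'.
have [lt_jj' | lt_j'j | <-] := ltngtP j j'; last by apply: mem_run_from => //; apply/tree_runP.
  have j'_succ := tree_chord_succ lt_jj' le_j'k t_uu'; subst j'.
  apply: mem_run_from => //; first by lia.
  apply/tree_runP => i /andP[le_ci]; rewrite ltnS leq_eqVlt => /predU1P[-> // | lt_ij].
  by apply: run; rewrite le_ci.
have j_succ : (j : nat) = j'.+1 by apply: tree_chord_succ; rewrite // t_sym.
have [le_cj' | lt_j'c] := leqP c j'.
  by apply: mem_run_from => //; apply/tree_runP => i /andP[le_ci lt_ij']; apply: run; lia.
have c_succ : c = j'.+1 by lia.
by have := run_start j' c_succ; rewrite c_succ -j_succ t_sym t_uu'.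
Qed.

Lemma tree_exit_exists c : c <= k -> (forall i, c = i.+1 -> ~~ t (v i) (v c)) ->
  exists z, has_exit c z.
Proof.
move=> le_ck run_start.
have [/existsP // | /existsPn no_exit] := boolP [exists z, has_exit c z].
have run_all u : u \in run_from c.
  rewrite -(closed_connect (run_from_closed run_start no_exit) (t_connect (v c) u)).
  by apply: mem_run_from => //; apply/tree_runP => i; lia.
have [c0 | [i c_succ]] : c = 0 \/ exists i, c = i.+1.
  by case: (c) => [|i]; [left | right; exists i].
  have [u u_out] := P_nonspanning.
  have /existsP[j /and3P[/eqP u_j _ _]] := run_all u.
  by rewrite u_j mem_v // -ltnS in u_out.
have /existsP[j /and3P[/eqP v_ij le_cj _]] := run_all (v i).
have le_ik : i <= k by lia.
have le_jk : j <= k by rewrite -ltnS.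
have := v_inj le_ik le_jk v_ij; lia.
Qed.

Lemma tree_exits_shared c0 j0 i j z : tree_exit c0 j0 z -> tree_exit i.+1 j z ->
  c0 <= i -> i < k -> 4 <= we i -> i = j0 /\ we i = 4.
Proof.
case/and5P=> _ _ z_out t_zj0 /tree_runP run0 /and5P[lt_ij le_jk _ t_zj _] le_c0i lt_ik ge4_i.
have le_j0i : j0 <= i.
  rewrite leqNgt; apply/negP => lt_ij0.
  by move: ge4_i; rewrite t_weight ?run0 ?le_c0i.
have := tree_nbrs_segment_le6 z_out t_zj0 t_zj (leq_ltn_trans le_j0i lt_ij) le_jk.
rewrite (sum_nat_split_at _ le_j0i lt_ij).
have := @sum_we_ge j0 i (ltnW lt_ik); have := @sum_we_ge i.+1 j le_jk.
move=> ge_right ge_left le6; have [i_j0 j_succ] : i = j0 /\ j = i.+1 by lia.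
subst j0 j; split=> //.
have := tree_nbrs_succ_weight_neq5 z_out t_zj0 t_zj lt_ik.
by case/andP: (we_bounds lt_ik); lia.
Qed.

Definition charge c := if c is i.+1 then we i - 3 else 2.

(* [x] is a junk value, only used when [v c] has no exit. *)
Definition exit_of c := odflt x [pick z | has_exit c z].

Lemma charge_succ i : charge i.+1 = we i - 3.
Proof. by []. Qed.

Lemma charge_le2 c : c <= k -> charge c <= 2.
Proof. by case: c => // i /we_bounds; rewrite charge_succ; lia. Qed.

Lemma exit_ofP c : c <= k -> 0 < charge c -> has_exit c (exit_of c).
Proof.
move=> le_ck pos_c; rewrite /exit_of; case: pickP => [z // | no_exit].
have [|z] := tree_exit_exists le_ck; last by rewrite no_exit.
by move=> i c_succ; apply: contraL pos_c; rewrite c_succ charge_succ => /t_weight ->.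
Qed.

Lemma exit_of_outside c : c <= k -> 0 < charge c -> exit_of c \in N :\: [set u in s].
Proof.
move=> le_ck /(exit_ofP le_ck) /existsP[j /and5P[_ le_jk z_out t_zj _]].
have adj_jz : adj (v j) (exit_of c) by rewrite t_adj // t_sym.
by rewrite in_setD (mem_N_adj (mem_v le_jk) adj_jz) andbT inE.
Qed.

Lemma charge_per_exit z :
  \sum_(c < k.+1 | (0 < charge c) && (exit_of c == z)) charge c <= 3.
Proof.
pose P c := (0 < charge c) && (exit_of c == z).
case: (pickP (fun c : 'I_k.+1 => P c)) => [c1 P_c1 | none]; last by rewrite big_pred0.
case: (arg_minnP (P := fun c : 'I_k.+1 => P c) val P_c1).
move=> c0 /andP[pos_c0 /eqP exit_c0] min_c0.
have le_c0k : c0 <= k by rewrite -ltnS.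
have /existsP[j0 exit0] := exit_ofP le_c0k pos_c0; rewrite exit_c0 in exit0.
apply: (leq_sum_two_points (i0 := c0) (i1 := inord j0.+1) (m := 2));
  rewrite ?pos_c0 ?exit_c0 ?eqxx ?charge_le2 //.
move=> c /andP[pos_c /eqP exit_c] ne_c0.
have lt_c0c : c0 < c by rewrite ltn_neqAle min_c0 /P ?pos_c ?exit_c ?eqxx // andbT eq_sym.
case: c pos_c exit_c ne_c0 lt_c0c => [[|i] lt_i] // pos_i exit_i _ lt_c0i.
have lt_ik : i < k := lt_i.
have /existsP[j exit1] := exit_ofP lt_ik pos_i; rewrite exit_i in exit1.
have ge4_i : 4 <= we i by rewrite charge_succ in pos_i; lia.
have [i_j0 we4] := tree_exits_shared exit0 exit1 lt_c0i lt_ik ge4_i.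
by split; [apply: val_inj; rewrite /= inordK -i_j0 | rewrite charge_succ we4].
Qed.

Lemma charge_total : \sum_(c < k.+1) charge c <= 3 * #|N :\: [set u in s]|.
Proof.
rewrite -(big_rmcond _ _ (P := fun c : 'I_k.+1 => 0 < charge c)); last first.
  by move=> c; rewrite lt0n negbK => /eqP.
rewrite (partition_big (fun c : 'I_k.+1 => exit_of c) (mem (N :\: [set u in s])))
  => [|c pos_c]; last by apply: exit_of_outside; rewrite // -ltnS.
rewrite mulnC -sum_nat_const; apply: leq_sum => z _; exact: charge_per_exit.
Qed.

Lemma card_N : #|N| = k.+1 + #|N :\: [set u in s]|.
Proof.
rewrite -(cardsID [set u in s] N) (setIidPr _); last first.
  by apply/subsetP => u; rewrite inE; apply: mem_N_P.
by rewrite cardsE (card_uniqP P_uniq).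
Qed.

Lemma pweight_P_le_card_nbhd : pweight w s + 5 <= 3 * #|N|.
Proof.
have charge_sum : \sum_(c < k.+1) charge c = 2 + \sum_(i < k) (we i - 3) by rewrite big_ord_recl.
have weight_sum : pweight w s = \sum_(i < k) (we i - 3) + 3 * k.
  have -> : 3 * k = \sum_(i < k) 3 by rewrite sum_nat_const card_ord mulnC.
  rewrite pweight_P big_mkord -big_split /=.
  by apply: eq_bigr => i _; rewrite subnK //; case/andP: (we_bounds (ltn_ord i)).
have := charge_total; rewrite card_N; lia.
Qed.

End ShortestPathNeighbourhood.

Theorem lemma5p1 (V : finType) (adj : rel V) (w : V -> V -> nat)
    (t : rel V) (x y : V) (p : seq V) (l : nat) :
  (* F = (V, adj) is a simple graph *)
  symmetric adj -> irreflexive adj ->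
  (* edge weights in {3,4,5}, weight is a function of the (unordered) edge *)
  (forall u v, w u v = w v u) ->
  (forall u v, adj u v -> w u v \in [:: 3; 4; 5]) ->
  (* T is a spanning tree of F all of whose edges have weight 3 *)
  spanning_tree t ->
  (forall u v, t u v -> w u v = 3) ->
  (* P = x :: p is a path of F with ends x, y and weight l *)
  gpath adj (x :: p) -> last x p = y -> pweight w (x :: p) = l ->
  (* F = T ∪ P *)
  (forall u v, adj u v = t u v || pedge (x :: p) u v) ->
  (* P is non-spanning *)
  (exists v, v \notin x :: p) ->
  (* F has no cycle of weight 11 *)
  (forall c, gcycle adj c -> cweight w c != 11) ->
  (* P has minimal weight among x,y-paths in F[N^1_F[P]] *)
  (forall q, gpath adj (x :: q) -> last x q = y ->
     all (fun v => v \in closed_nbhd adj (x :: p)) (x :: q) ->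
     l <= pweight w (x :: q)) ->
  ((l%:R / 3%:R + 5%:R / 3%:R : rat) <= (#|closed_nbhd adj (x :: p)|)%:R)%R.
Proof.
move=> _ _ _ adj_weight [t_sym [t_connect _]] t_weight P_gpath <- <- F_eq.
move=> P_nonspanning no_cycle11 P_min.
have t_adj : subrel t adj by move=> u u' t_uu'; rewrite F_eq t_uu'.
have := pweight_P_le_card_nbhd adj_weight t_sym t_connect t_weight t_adj P_gpath P_nonspanning
  no_cycle11 P_min.
by rewrite -mulrDl -natrD ler_pdivrMr ?ltr0n // -natrM ler_nat mulnC.
Qed.
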